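(* Let $\nabla$ be a metric connection on an anchored metric bundle $(E,\langle\cdot,\cdot\rangle,a_E)$ over $M$, and let $\circ^\nabla$ be the bracket $\langle e_1\circ^\nabla e_2,e_3\rangle=\langle\nabla_{e_1}e_2,e_3\rangle-\langle\nabla_{e_2}e_1,e_3\rangle+\langle\nabla_{e_3}e_1,e_2\rangle$. Then $(E,\langle\cdot,\cdot\rangle,\circ^\nabla,a_E)$ is a pre-Courant algebroid if and only if either of the following equivalent conditions holds: (1) for all $e_1,e_2\in\Gamma(E)$ the operator $C^\nabla(e_1,e_2):\Gamma(E)\to\Gamma(E)$ is $C^\infty(M)$-linear; (2) $\mathcal{D}(f)\circ^\nabla e=0$ for all $e\in\Gamma(E)$ and $f\in C^\infty(M)$.
   Context: An anchored metric bundle: a vector bundle $E\to M$ with pseudo-metric $\langle\cdot,\cdot\rangle$ and bundle map $a_E:E\to TM$. A metric connection: $\mathbb{R}$-bilinear $\nabla$ with $\nabla_{fe_1}e_2=f\nabla_{e_1}e_2$, $\nabla_{e_1}(fe_2)=a_E(e_1)(f)e_2+f\nabla_{e_1}e_2$, $a_E(e_1)\langle e_2,e_3\rangle=\langle\nabla_{e_1}e_2,e_3\rangle+\langle e_2,\nabla_{e_1}e_3\rangle$. $\mathcal{D}:C^\infty(M)\to\Gamma(E)$ is defined by $\langle\mathcal{D}(f),e\rangle=a_E(e)(f)$. The Courant curvature is $C^\nabla(e_1,e_2)=\nabla_{e_1}\nabla_{e_2}-\nabla_{e_2}\nabla_{e_1}-\nabla_{e_1\circ^\nabla e_2}$. $(E,\langle\cdot,\cdot\rangle,\circ^\nabla,a_E)$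 is always a metric algebroid (i.e. $a_E(e)\langle h_1,h_2\rangle=\langle e\circ h_1,h_2\rangle+\langle h_1,e\circ h_2\rangle$ and $e\circ e=\tfrac12\mathcal{D}\langle e,e\rangle$); a pre-Courant algebroid is a metric algebroid with $a_E(e_1\circ e_2)=[a_E(e_1),a_E(e_2)]$ for all $e_1,e_2$. *)

(* Algebraic model of an anchored metric bundle:
   A   = C^oo(M), a commutative R-algebra of functions (R a real field, e.g. the reals),
         which is reduced (C^oo(M) has no nonzero nilpotents);
   V   = Gamma(E), an A-module;
   vector fields on M = R-linear derivations of A;
   anchor a : V -> (A -> A), A-linear in the section, each a e a derivation;
   pairing p : V -> V -> A symmetric, A-bilinear, nondegenerate. *)
From HB Require Import structures.
From mathcomp Require Import all_boot all_order all_algebra.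
Set Implicit Arguments. Unset Strict Implicit. Unset Printing Implicit Defensive.
Import Order.TTheory GRing.Theory Num.Theory.
Local Open Scope ring_scope.

Section Defs.
Variables (R : realFieldType) (A : comAlgType R) (V : lmodType A).

Definition reduced_ring : Prop := forall x : A, x * x = 0 -> x = 0.

Definition is_anchor (a : V -> A -> A) : Prop :=
  (forall (f : A) (e1 e2 : V) (g : A), a (f *: e1 + e2) g = f * a e1 g + a e2 g) /\
  (forall (e : V) (c : R) (g h : A), a e (c *: g + h) = c *: a e g + a e h) /\
  (forall (e : V) (g h : A), a e (g * h) = a e g * h + g * a e h).

Definition is_pseudo_metric (p : V -> V -> A) : Prop :=
  (forall e h, p e h = p h e) /\
  (forall (f : A) e1 e2 h, p (f *: e1 + e2) h = f * p e1 h + p e2 h) /\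
  (forall e, (forall h, p e h = 0) -> e = 0).

Definition is_metric_connection (p : V -> V -> A) (a : V -> A -> A)
    (nabla : V -> V -> V) : Prop :=
  (forall e1 e1' e2, nabla (e1 + e1') e2 = nabla e1 e2 + nabla e1' e2) /\
  (forall e1 e2 e2', nabla e1 (e2 + e2') = nabla e1 e2 + nabla e1 e2') /\
  (forall (f : A) e1 e2, nabla (f *: e1) e2 = f *: nabla e1 e2) /\
  (forall (f : A) e1 e2, nabla e1 (f *: e2) = a e1 f *: e2 + f *: nabla e1 e2) /\
  (forall e1 e2 e3, a e1 (p e2 e3) = p (nabla e1 e2) e3 + p e2 (nabla e1 e3)).

Definition is_D (p : V -> V -> A) (a : V -> A -> A) (D : A -> V) : Prop :=
  forall f e, p (D f) e = a e f.

Definition is_circ_nabla (p : V -> V -> A) (nabla : V -> V -> V)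
    (circ : V -> V -> V) : Prop :=
  forall e1 e2 e3,
    p (circ e1 e2) e3 = p (nabla e1 e2) e3 - p (nabla e2 e1) e3 + p (nabla e3 e1) e2.

Definition courant_curvature (nabla : V -> V -> V) (circ : V -> V -> V)
    (e1 e2 e3 : V) : V :=
  nabla e1 (nabla e2 e3) - nabla e2 (nabla e1 e3) - nabla (circ e1 e2) e3.

Definition Alinear (F : V -> V) : Prop :=
  forall (f : A) e e', F (f *: e + e') = f *: F e + F e'.

Definition is_metric_algebroid (p : V -> V -> A) (circ : V -> V -> V)
    (a : V -> A -> A) (D : A -> V) : Prop :=
  (forall e h1 h2, a e (p h1 h2) = p (circ e h1) h2 + p h1 (circ e h2)) /\
  (forall e, circ e e = ((2 : R)^-1)%:A *: D (p e e)).

Definition is_pre_courant (p : V -> V -> A) (circ : V -> V -> V)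
    (a : V -> A -> A) (D : A -> V) : Prop :=
  is_metric_algebroid p circ a D /\
  (forall e1 e2 (f : A), a (circ e1 e2) f = a e1 (a e2 f) - a e2 (a e1 f)).

End Defs.

(* Everything reduces to the identity
     a(e1 o e2) f = a e1 (a e2 f) - a e2 (a e1 f) + <D f o e1, e2>,
   obtained from the metric-algebroid axiom for o and its polarisation
   e1 o e2 + e2 o e1 = D<e1, e2>.  The connection's Leibniz rule then gives
     C(e1, e2)(f e3 + e') = f C(e1, e2) e3 + C(e1, e2) e' - <D f o e1, e2> e3,
   so both the anchor defect and the curvature defect are the pairing
   <D f o e1, e2>.  For condition (1), with w = D f o e, the curvature
   defect <w, h> w of C(e, h) at e3 = w vanishes; pairing it with h gives
   <w, h>^2 = 0, and reducedness of C^oo(M) kills <w, h>. *)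
From mathcomp Require Import all_boot all_order all_algebra.
From mathcomp Require Import ring.
Set Implicit Arguments. Unset Strict Implicit. Unset Printing Implicit Defensive.
Import Order.TTheory GRing.Theory Num.Theory.
Local Open Scope ring_scope.

Section PseudoMetric.
Variables (R : realFieldType) (A : comAlgType R) (V : lmodType A).
Variable p : V -> V -> A.
Hypothesis hp : is_pseudo_metric p.

Lemma pairingC e h : p e h = p h e.
Proof. by case: hp. Qed.

Lemma pairing_linearl f e1 e2 h : p (f *: e1 + e2) h = f * p e1 h + p e2 h.
Proof. by case: hp => _ []. Qed.

Lemma pairingBl e1 e2 h : p (e1 - e2) h = p e1 h - p e2 h.
Proof. by rewrite addrC -scaleN1r pairing_linearl mulN1r addrC. Qed.

Lemma pairing0l h : p 0 h = 0.
Proof. by rewrite -(subrr 0) pairingBl subrr. Qed.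

Lemma pairingDl e1 e2 h : p (e1 + e2) h = p e1 h + p e2 h.
Proof. by have := pairing_linearl 1 e1 e2 h; rewrite scale1r mul1r. Qed.

Lemma pairingZl f e h : p (f *: e) h = f * p e h.
Proof. by rewrite -[f *: e]addr0 pairing_linearl pairing0l addr0. Qed.

Lemma pairingNl e h : p (- e) h = - p e h.
Proof. by rewrite -scaleN1r pairingZl mulN1r. Qed.

Lemma pairingBr e1 e2 h : p h (e1 - e2) = p h e1 - p h e2.
Proof. by rewrite pairingC pairingBl !(pairingC h). Qed.

Lemma pairing_eq0 e : (forall h, p e h = 0) -> e = 0.
Proof. by case: hp => _ [_ nondeg]; apply: nondeg. Qed.

Lemma pairing_inj e e' : (forall h, p e h = p e' h) -> e = e'.
Proof.
by move=> ee'; apply/eqP; rewrite -subr_eq0; apply/eqP/pairing_eq0 => h;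
  rewrite pairingBl ee' subrr.
Qed.

End PseudoMetric.

Section CircNabla.
Variables (R : realFieldType) (A : comAlgType R) (V : lmodType A).
Variables (p : V -> V -> A) (a : V -> A -> A) (nabla : V -> V -> V).
Variables (D : A -> V) (circ : V -> V -> V).
Hypotheses (hp : is_pseudo_metric p) (hnabla : is_metric_connection p a nabla).
Hypotheses (hD : is_D p a D) (hcirc : is_circ_nabla p nabla circ).

Let pairingC := pairingC hp.

Lemma nabla_metric e1 e2 e3 :
  a e1 (p e2 e3) = p (nabla e1 e2) e3 + p e2 (nabla e1 e3).
Proof. by case: hnabla => _ [_ [_ []]]. Qed.

Lemma nablaDr e1 e2 e2' : nabla e1 (e2 + e2') = nabla e1 e2 + nabla e1 e2'.
Proof. by case: hnabla => _ []. Qed.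

Lemma nablaZr f e1 e2 : nabla e1 (f *: e2) = a e1 f *: e2 + f *: nabla e1 e2.
Proof. by case: hnabla => _ [_ [_ []]]. Qed.

Lemma circ_metric e h1 h2 :
  a e (p h1 h2) = p (circ e h1) h2 + p h1 (circ e h2).
Proof.
by rewrite [p h1 (circ _ _)]pairingC !hcirc nabla_metric [p h1 (nabla e h2)]pairingC; ring.
Qed.

Lemma circ_polar e1 e2 : circ e1 e2 + circ e2 e1 = D (p e1 e2).
Proof.
apply: (pairing_inj hp) => h.
by rewrite (pairingDl hp) !hcirc hD nabla_metric [p e1 (nabla h e2)]pairingC; ring.
Qed.

Lemma circ_diag e : circ e e = ((2 : R)^-1)%:A *: D (p e e).
Proof.
have half2 : ((2 : R)^-1)%:A * 2 = 1 :> A.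
  rewrite -scalerAl mul1r -[2 : A]scaler_nat scalerA mulVf ?scale1r //.
  by rewrite pnatr_eq0.
apply: (pairing_inj hp) => h.
rewrite (pairingZl hp) hD nabla_metric [p e (nabla h e)]pairingC hcirc subrr add0r.
by rewrite -mulr2n -(mulr_natr (p _ _)) mulrCA half2 mulr1.
Qed.

Lemma circ_metric_algebroid : is_metric_algebroid p circ a D.
Proof. by split; [exact: circ_metric | exact: circ_diag]. Qed.

Lemma anchor_circ e1 e2 f :
  a (circ e1 e2) f = a e1 (a e2 f) - a e2 (a e1 f) + p (circ (D f) e1) e2.
Proof.
have circ1D : circ e1 (D f) = D (p e1 (D f)) - circ (D f) e1.
  by rewrite -circ_polar addrK.
have metricD := circ_metric e1 e2 (D f).
rewrite [p e2 (D f)]pairingC hD circ1D (pairingBr hp) [p e2 (D _)]pairingC hD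
  [p e1 (D f)]pairingC hD [p e2 (circ _ _)]pairingC in metricD.
by rewrite -hD pairingC metricD; ring.
Qed.

Lemma courant_curvature_linear_defect e1 e2 f e3 e' :
  courant_curvature nabla circ e1 e2 (f *: e3 + e') =
    f *: courant_curvature nabla circ e1 e2 e3
    + courant_curvature nabla circ e1 e2 e'
    - p (circ (D f) e1) e2 *: e3.
Proof.
apply: (pairing_inj hp) => h; rewrite /courant_curvature.
rewrite !nablaDr !nablaZr !nablaDr !nablaZr.
rewrite !(pairingBl hp) !(pairingDl hp) !(pairingZl hp) !(pairingBl hp).
by rewrite !(pairingNl hp) anchor_circ; ring.
Qed.

Lemma pre_courantE :
  is_pre_courant p circ a D <-> forall f e, circ (D f) e = 0.
Proof.
split=> [[_ hanchor] f e | circD0].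
  apply: (pairing_eq0 hp) => h.
  apply: (@addrI _ (a e (a h f) - a h (a e f))).
  by rewrite addr0 -anchor_circ hanchor.
split; first exact: circ_metric_algebroid.
by move=> e1 e2 f; rewrite anchor_circ circD0 (pairing0l hp) addr0.
Qed.

Lemma courant_curvature_linearE : reduced_ring A ->
  (forall e1 e2, Alinear (courant_curvature nabla circ e1 e2)) <->
  (forall f e, circ (D f) e = 0).
Proof.
move=> red; split=> [linC f e | circD0 e1 e2 f e e']; last first.
  by rewrite courant_curvature_linear_defect circD0 (pairing0l hp) scale0r subr0.
apply: (pairing_eq0 hp) => h; set w := circ (D f) e.
have defect0 : p w h *: w = 0.
  have := courant_curvature_linear_defect e h f w 0; rewrite linC => /eqP.
  by rewrite eq_sym -subr_eq0 addrC addKr oppr_eq0 => /eqP.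
by apply: red; rewrite -(pairingZl hp) defect0 (pairing0l hp).
Qed.

End CircNabla.

Theorem proposition3p8 (R : realFieldType) (A : comAlgType R) (V : lmodType A)
    (p : V -> V -> A) (a : V -> A -> A) (nabla : V -> V -> V)
    (D : A -> V) (circ : V -> V -> V) :
  reduced_ring A ->
  is_pseudo_metric p -> is_anchor a -> is_metric_connection p a nabla ->
  is_D p a D -> is_circ_nabla p nabla circ ->
  (is_pre_courant p circ a D <->
     (forall e1 e2, Alinear (courant_curvature nabla circ e1 e2))) /\
  (is_pre_courant p circ a D <->
     (forall (f : A) (e : V), circ (D f) e = 0)).
Proof.
move=> red hp _ hnabla hD hcirc.
have PC := pre_courantE hp hnabla hD hcirc.
have CL := courant_curvature_linearE hp hnabla hD hcirc red.
by split; [rewrite PC CL | exact: PC].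
Qed.
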